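(* Let $K$ be a field, $P=K[x_1,\dots,x_n]$, $\sigma$ a term ordering on $\mathbb{T}^n$, and let $I,J$ be ideals in $P$. If $I\subsetneq J$ then $O_\sigma(J)\prec_\sigma O_\sigma(I)$.
   Context: $\mathbb{T}^n$ is the monoid of power-products in $x_1,\dots,x_n$. A tuple $(t_1,\dots,t_r)$ of distinct power-products is $\sigma$-ordered if $t_1<_\sigma\cdots<_\sigma t_r$ (the empty tuple is $\sigma$-ordered). For an ideal $I$, $O_\sigma(I)$ is the $\sigma$-ordered tuple of the leading terms of a minimal $\sigma$-Gröbner basis of $I$ (equivalently, the minimal power-product generators of $\mathrm{LT}_\sigma(I)$ in increasing $\sigma$-order); it is the empty tuple if $I=0$. For $\sigma$-ordered tuples $T=(t_1,\dots,t_r)$ and $T'=(t'_1,\dots,t'_{r'})$, $T'\prec_\sigma T$ means either $T$ is a proper prefix of $T'$ (i.e. $r<r'$ and $t_i=t'_i$ for $i\le r$), or there is $k\le\min(r,r')$ with $t_i=t'_i$ for $i<k$ and $t'_k<_\sigma t_k$. *)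

From HB Require Import structures.
From mathcomp Require Import all_boot all_order all_algebra.
From mathcomp Require Import mpoly.
From Stdlib Require Import ClassicalEpsilon.

Set Implicit Arguments.
Unset Strict Implicit.
Unset Printing Implicit Defensive.

Import Order.TTheory GRing.Theory.
Local Open Scope ring_scope.

Section Groebner.
Variable n : nat.
Local Notation mon := ('X_{1..n}).

(* A term ordering sigma on T^n, given as its (reflexive) "<=_sigma" relation:
   a total order on power-products, compatible with multiplication
   (= addition of exponent vectors) and with 1 (= 0%MM) as least element. *)
Definition term_order (le : rel mon) : Prop :=
  (forall m, le m m) /\
  (forall m1 m2, le m1 m2 -> le m2 m1 -> m1 = m2) /\
  (forall m1 m2 m3, le m1 m2 -> le m2 m3 -> le m1 m3) /\
  (forall m1 m2, le m1 m2 || le m2 m1) /\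
  (forall m1 m2 m3, le m1 m2 -> le (m1 + m3)%MM (m2 + m3)%MM) /\
  (forall m, le 0%MM m).

Definition term_lt (le : rel mon) (m1 m2 : mon) : bool := le m1 m2 && (m1 != m2).

Variable K : fieldType.

Definition is_ideal (I : {mpoly K[n]} -> Prop) : Prop :=
  [/\ I 0,
      (forall f g, I f -> I g -> I (f + g))
    & (forall p f, I f -> I (p * f))].

Definition is_LT (le : rel mon) (f : {mpoly K[n]}) (m : mon) : Prop :=
  m \in msupp f /\ forall m', m' \in msupp f -> le m' m.

(* m is the leading term of some nonzero element of I, i.e. a power-product
   of LT_sigma(I) (the set of leading terms is already closed under
   multiplication by power-products when I is an ideal). *)
Definition in_LTset (le : rel mon) (I : {mpoly K[n]} -> Prop) (m : mon) : Prop :=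
  exists f, [/\ I f, f != 0 & is_LT le f m].

Definition min_gen (le : rel mon) (I : {mpoly K[n]} -> Prop) (m : mon) : Prop :=
  in_LTset le I m /\
  forall m', in_LTset le I m' -> (m' <= m)%MM -> m' = m.

Definition is_O (le : rel mon) (I : {mpoly K[n]} -> Prop) (s : seq mon) : Prop :=
  sorted (term_lt le) s /\ (forall m, m \in s <-> min_gen le I m).

(* O_sigma(I): the (unique, by Dickson's lemma) such tuple, chosen by
   classical description. *)
Definition O_sigma (le : rel mon) (I : {mpoly K[n]} -> Prop) : seq mon :=
  epsilon (inhabits [::]) (is_O le I).

End Groebner.

Definition tuple_prec (n : nat) (le : rel 'X_{1..n}) (T' T : seq 'X_{1..n}) : Prop :=
  (size T < size T' /\ forall i, i < size T -> nth 0%MM T i = nth 0%MM T' i)%N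
  \/ exists k, [/\ (k < minn (size T) (size T'))%N,
                  (forall i, i < k -> nth 0%MM T i = nth 0%MM T' i)%N
                & term_lt le (nth 0%MM T' k) (nth 0%MM T k)].

(* The σ-leading terms of I form a monomial ideal contained in that of J.  If
   the two leading-term ideals were equal, a σ-minimal leading term of an
   element of J \ I could be cancelled by an element of I with the same
   leading term, producing an element of J \ I with a smaller leading term;
   hence LT(I) ⊊ LT(J), so O_σ(I) ≠ O_σ(J).  Every generator of LT(I) is
   divisible by a generator of LT(J), and the generators of LT(I) form an
   antichain for divisibility; comparing the two σ-sorted tuples from the left,
   the first position where they differ must carry a smaller entry in O_σ(J),
   since otherwise a generator of LT(I) would be divisible by an earlier one.
   Dickson's lemma provides finiteness of antichains and well-foundedness of σ. *)

From mathcomp Require Import all_boot all_order all_algebra.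
From mathcomp Require Import mpoly.
From Stdlib Require Import Classical ClassicalEpsilon.

Set Implicit Arguments.
Unset Strict Implicit.
Unset Printing Implicit Defensive.

Import Order.POrderTheory GRing.Theory.

Lemma ex_min_from (g : nat -> nat) (N : nat) :
  exists j, N <= j /\ forall i, N <= i -> g j <= g i.
Proof.
suff: forall v i, N <= i -> g i <= v ->
    exists j, N <= j /\ forall i, N <= i -> g j <= g i.
  by move/(_ (g N) N); apply.
elim=> [|v IHv] i le_Ni le_gi_v.
  by exists i; split=> // k _; move: le_gi_v; rewrite leqn0 => /eqP ->.
have [[k le_Nk le_gk_v] | no_smaller] := classic (exists2 k, N <= k & g k <= v).
  exact: IHv le_Nk le_gk_v.
exists i; split=> // k le_Nk; apply: leq_trans le_gi_v _; rewrite leqNgt ltnS.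
by apply/negP => le_gk_v; apply: no_smaller; exists k.
Qed.

Lemma nondecreasing_subseq (g : nat -> nat) : exists phi : nat -> nat,
  {homo phi : i j / i < j} /\ {homo g \o phi : i j / i < j >-> i <= j}.
Proof.
have [mn mnP] := choice _ (ex_min_from g).
(* The [i]-th index [mn (t i)] minimises [g] past the threshold [t i];
   the next threshold lies just beyond it. *)
pose t i := iter i (fun N => (mn N).+1) 0.
have lt_step i : mn (t i) < mn (t i.+1) by case: (mnP (t i.+1)).
exists (mn \o t); split.
  by apply: homo_ltn => [y x z|i]; [exact: ltn_trans | exact: lt_step].
apply: homo_ltn => [y x z|i /=]; first exact: leq_trans.
by apply: (mnP (t i)).2; apply: leq_trans (ltnW (lt_step i)); case: (mnP (t i)).
Qed.

Section Dickson.
Variable n : nat.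
Local Notation mon := ('X_{1..n}).

Lemma dickson_subseq (k : nat) (f : nat -> mon) : exists phi : nat -> nat,
  {homo phi : i j / i < j} /\
  forall j : 'I_n, j < k -> {homo (fun i => f (phi i) j) : i1 i2 / i1 < i2 >-> i1 <= i2}.
Proof.
elim: k => [|k [phi [phi_incr f_phi_incr]]]; first by exists id; split.
have [le_nk | lt_kn] := leqP n k.
  exists phi; split=> // j lt_jk; apply: f_phi_incr.
  exact: leq_trans (ltn_ord j) le_nk.
pose k' := Ordinal lt_kn.
have [psi [psi_incr f_psi_incr]] := nondecreasing_subseq (fun i => f (phi i) k').
exists (phi \o psi); split=> [i1 i2 /psi_incr /phi_incr // | j].
rewrite ltnS leq_eqVlt => /predU1P [eq_jk | lt_jk] i1 i2 lt_i12.
  have -> : j = k' by exact: val_inj.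
  exact: f_psi_incr.
exact: f_phi_incr (psi_incr _ _ lt_i12).
Qed.

Lemma dickson (f : nat -> mon) : exists i j, i < j /\ (f i <= f j)%MM.
Proof.
have [phi [phi_incr f_phi_incr]] := dickson_subseq n f.
exists (phi 0), (phi 1); split; first exact: phi_incr.
by apply/mnm_lepP => j; exact: f_phi_incr.
Qed.

Definition antichain (P : mon -> Prop) :=
  forall m m', P m -> P m' -> (m <= m')%MM -> m = m'.

Lemma antichain_finite (P : mon -> Prop) :
  antichain P -> exists s : seq mon, forall m, m \in s <-> P m.
Proof.
move=> antiP; apply: NNPP => no_enum.
have fresh (s : seq mon) : exists m, P m /\ m \notin s.
  apply: NNPP => all_in; apply: no_enum.
  exists [seq m <- s | excluded_middle_informative (P m)] => m.
  rewrite mem_filter; split=> [/andP [/sumboolP //] | Pm].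
  rewrite (introT (sumboolP _) Pm) /=; apply/negPn/negP => m_notin_s.
  by apply: all_in; exists m.
have [next nextP] := choice _ fresh.
pose prefix i := iter i (fun s => next s :: s) [::].
have in_prefix i j : i < j -> next (prefix i) \in prefix j.
  elim: j => // j IHj; rewrite ltnS leq_eqVlt => /predU1P [-> | lt_ij].
    exact: mem_head.
  by rewrite inE IHj ?orbT.
have [i [j [lt_ij le_ij]]] := dickson (fun i => next (prefix i)).
have eq_ij := antiP _ _ (nextP (prefix i)).1 (nextP (prefix j)).1 le_ij.
by have := (nextP (prefix j)).2; rewrite -eq_ij in_prefix.
Qed.

Definition mingen (L : mon -> Prop) (m : mon) :=
  L m /\ forall m', L m' -> (m' <= m)%MM -> m' = m.

Lemma mingen_finite (L : mon -> Prop) :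
  exists s : seq mon, forall m, m \in s <-> mingen L m.
Proof.
by apply: antichain_finite => m m' [Lm _] [_ m'_min] /(m'_min _ Lm).
Qed.

Lemma mingen_below (L : mon -> Prop) (m : mon) :
  L m -> exists2 h, mingen L h & (h <= m)%MM.
Proof.
elim/(well_founded_ind (@ltom_wf n)): m => m IHm Lm.
have [min_m | not_min] := classic (mingen L m); first by exists m; rewrite ?lepm_refl.
apply: NNPP => no_below; apply: not_min.
split=> // m' Lm' le_m'm; apply: NNPP => /eqP neq_m'm.
have lt_m'm : (m' < m)%O by rewrite lt_neqAle neq_m'm lem_leo.
have [h h_min le_hm'] := IHm m' lt_m'm Lm'.
by apply: no_below; exists h => //; exact: lepm_trans le_m'm.
Qed.

End Dickson.

Lemma ex_rel_min (T : eqType) (r : rel T) (s : seq T) :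
  transitive r -> total r -> s != [::] -> exists2 m, m \in s & {in s, forall x, r m x}.
Proof.
move=> r_trans r_total s_neq_nil.
have: sorted r (sort r s) by exact: sort_sorted.
have: sort r s =i s by exact: mem_sort.
case: (sort r s) (size_sort r s) => [|m t]; first by case: s s_neq_nil.
move=> _ mem_mt /= path_mt; exists m; first by rewrite -mem_mt mem_head.
move=> x; rewrite -mem_mt inE => /predU1P [-> | x_in_t].
  by have := r_total m m; rewrite orbb.
exact: (allP (order_path_min r_trans path_mt)).
Qed.

Section TermOrder.
Variables (n : nat) (le : rel 'X_{1..n}).
Local Notation mon := ('X_{1..n}).
Hypothesis le_term : term_order le.

Lemma term_le_anti m1 m2 : le m1 m2 -> le m2 m1 -> m1 = m2.
Proof. by case: le_term => _ [le_anti _]; exact: le_anti. Qed.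

Lemma term_le_trans : transitive le.
Proof. by case: le_term => _ [_ [le_trans _]] y x z; exact: le_trans. Qed.

Lemma term_le_total : total le.
Proof. by case: le_term => _ [_ [_ [le_total _]]]. Qed.

Lemma term_le_add2l u m1 m2 : le m1 m2 -> le (u + m1)%MM (u + m2)%MM.
Proof.
by case: le_term => _ [_ [_ [_ [le_add _]]]] /(le_add _ _ u); rewrite !(addmC u).
Qed.

Lemma lepm_term_le m1 m2 : (m1 <= m2)%MM -> le m1 m2.
Proof.
case: le_term => _ [_ [_ [_ [_ le_0]]]] /submK <-.
by have := term_le_add2l m1 (le_0 (m2 - m1)%MM); rewrite addm0 addmC.
Qed.

Lemma term_lt_trans : transitive (term_lt le).
Proof.
move=> y x z /andP [le_xy neq_xy] /andP [le_yz _].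
rewrite /term_lt (term_le_trans le_xy le_yz); apply: contra_neq neq_xy => eq_xz.
by apply: term_le_anti => //; rewrite eq_xz.
Qed.

Lemma term_le_min (P : mon -> Prop) m0 :
  P m0 -> exists2 m, P m & forall m', P m' -> le m m'.
Proof.
move=> Pm0; have [s s_mingen] := mingen_finite P.
have [h /s_mingen h_in_s _] := mingen_below Pm0.
have s_neq_nil : s != [::] by apply: contraTneq h_in_s => ->.
have [m /s_mingen [Pm _] m_min] := ex_rel_min term_le_trans term_le_total s_neq_nil.
exists m => // m' /mingen_below [h' /s_mingen h'_in_s le_h'm'].
exact: term_le_trans (m_min _ h'_in_s) (lepm_term_le le_h'm').
Qed.

Lemma sort_term_lt (s : seq mon) : uniq s -> sorted (term_lt le) (sort le s).
Proof.
rewrite -(sort_uniq le) uniq_pairwise => /pairwise_sorted sorted_neq.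
by rewrite /term_lt sorted_relI sort_sorted //; exact: term_le_total.
Qed.

Lemma O_sigmaP (K : fieldType) (I : {mpoly K[n]} -> Prop) : is_O le I (O_sigma le I).
Proof.
apply: epsilon_spec; have [s s_mingen] := mingen_finite (in_LTset le I).
exists (sort le (undup s)); split; first by rewrite sort_term_lt ?undup_uniq.
by move=> m; rewrite mem_sort mem_undup.
Qed.

Lemma tuple_prec_nil (T : seq mon) : T != [::] -> tuple_prec le T [::].
Proof. by case: T => // t T _; left. Qed.

Lemma tuple_prec_head t t' (T T' : seq mon) :
  term_lt le t' t -> tuple_prec le (t' :: T') (t :: T).
Proof. by move=> lt_t't; right; exists 0; rewrite minnSS. Qed.

Lemma tuple_prec_cons t (T T' : seq mon) :
  tuple_prec le T' T -> tuple_prec le (t :: T') (t :: T).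
Proof.
case=> [[lt_size eq_nth] | [k [lt_k eq_nth lt_nth]]].
  by left; split=> [|[|i]]; rewrite /= ?ltnS //; exact: eq_nth.
by right; exists k.+1; split=> [|[|i]|]; rewrite /= ?minnSS ?ltnS //; exact: eq_nth.
Qed.

Lemma tuple_prec_of_cover (G H : seq mon) :
  sorted (term_lt le) G -> sorted (term_lt le) H ->
  {in G, forall g, exists2 h, h \in H & (h <= g)%MM} ->
  {in G &, forall g g', (g <= g')%MM -> g = g'} ->
  H != G -> tuple_prec le H G.
Proof.
elim: G H => [|g G IHG] [|h H] //= path_G path_H cover antichain neq_HG.
- exact: tuple_prec_nil.
- by have [] := cover g (mem_head g G).
have g_lt_G := allP (order_path_min term_lt_trans path_G).
have sub_G : {subset G <= g :: G} := @mem_behead _ (g :: G).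
have [eq_hg | neq_hg] := eqVneq h g.
  subst h; apply: tuple_prec_cons.
  apply: IHG; rewrite ?(path_sorted path_G) ?(path_sorted path_H) //.
  - move=> g' g'_in_G; have [x] := cover g' (sub_G _ g'_in_G).
    rewrite inE => /predU1P [-> le_gg' | x_in_H le_xg']; last by exists x.
    have := g_lt_G g' g'_in_G.
    by rewrite /term_lt (antichain g g') ?eqxx ?andbF ?mem_head ?sub_G.
  - by move=> x y /sub_G x_in_gG /sub_G y_in_gG; apply: antichain.
  - by rewrite eqseq_cons eqxx in neq_HG.
apply: tuple_prec_head; have [x x_in_hH le_xg] := cover g (mem_head g G).
have le_hx : le h x.
  have h_lt_H := allP (order_path_min term_lt_trans path_H).
  move: x_in_hH; rewrite inE => /predU1P [-> | /h_lt_H /andP [] //].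
  by have := term_le_total h h; rewrite orbb.
by rewrite /term_lt (term_le_trans le_hx (lepm_term_le le_xg)) neq_hg.
Qed.

End TermOrder.

Section Ideals.
Variables (n : nat) (K : fieldType) (I : {mpoly K[n]} -> Prop).
Hypothesis idealI : is_ideal I.
Local Open Scope ring_scope.

Lemma ideal0 : I 0.
Proof. by case: idealI. Qed.

Lemma idealD f g : I f -> I g -> I (f + g).
Proof. by case: idealI => _ I_add _; exact: I_add. Qed.

Lemma idealMl p f : I f -> I (p * f).
Proof. by case: idealI => _ _ I_mul; exact: I_mul. Qed.

Lemma idealB f g : I f -> I g -> I (f - g).
Proof. by move=> If Ig; rewrite -mulN1r; apply: idealD => //; exact: idealMl. Qed.

Lemma notin_ideal_neq0 f : ~ I f -> f != 0.
Proof. by apply: contra_not_neq => ->; exact: ideal0. Qed.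

End Ideals.

Section LeadingTerms.
Variables (n : nat) (le : rel 'X_{1..n}) (K : fieldType).
Hypothesis le_term : term_order le.
Local Notation mon := ('X_{1..n}).
Local Open Scope ring_scope.

Lemma is_LT_exists (f : {mpoly K[n]}) : f != 0 -> exists m, is_LT le f m.
Proof.
rewrite -msupp_eq0 => supp_neq_nil.
have flip_trans : transitive (fun x y => le y x).
  by move=> y x z le_yx le_zy; exact: term_le_trans le_zy le_yx.
have flip_total : total (fun x y => le y x) by move=> x y; exact: term_le_total.
by have [m m_in m_max] := ex_rel_min flip_trans flip_total supp_neq_nil; exists m.
Qed.

Lemma in_LTset_lepm (I : {mpoly K[n]} -> Prop) m m' :
  is_ideal I -> in_LTset le I m -> (m <= m')%MM -> in_LTset le I m'.
Proof.
move=> idealI [f [If _ [f_m f_max]]] le_mm'.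
have [u ->] : exists u, m' = (u + m)%MM by exists (m' - m)%MM; rewrite submK.
have supp_fX : msupp (f * 'X_[u]) =i [seq (u + x)%MM | x <- msupp f].
  exact/perm_mem/msuppMX.
have um_in : (u + m)%MM \in msupp (f * 'X_[u]) by rewrite supp_fX map_f.
exists (f * 'X_[u]); split.
- by rewrite mulrC; exact: idealMl.
- by apply: contraTneq um_in => ->; rewrite msupp0.
- split=> // x; rewrite supp_fX => /mapP [y y_in ->].
  exact/term_le_add2l/f_max.
Qed.

Lemma LT_cancel (f g : {mpoly K[n]}) m :
  is_LT le f m -> is_LT le g m ->
  {in msupp (f - (f@_m / g@_m)%:MP * g), forall m', term_lt le m' m}.
Proof.
move=> [f_m f_max] [g_m g_max] m'; rewrite mcoeff_msupp mcoeffB mcoeffCM => h_m'.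
apply/andP; split.
  have [f_m'0 | f_m'] := eqVneq f@_m' 0; last by apply: f_max; rewrite mcoeff_msupp.
  apply: g_max; rewrite mcoeff_msupp; apply: contraNneq h_m' => ->.
  by rewrite f_m'0 mulr0 subr0.
apply: contraNneq h_m' => ->; rewrite divfK ?subrr //.
by rewrite -mcoeff_msupp.
Qed.

Lemma ideal_incl_of_LTset_incl (I J : {mpoly K[n]} -> Prop) :
  is_ideal I -> is_ideal J -> (forall f, I f -> J f) ->
  (forall m, in_LTset le J m -> in_LTset le I m) -> forall f, J f -> I f.
Proof.
move=> idealI idealJ IJ LT_JI f0 Jf0; apply: NNPP => nIf0.
pose bad m := exists f, [/\ J f, ~ I f & is_LT le f m].
have [m0 LTf0] := is_LT_exists (notin_ideal_neq0 idealI nIf0).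
have bad_m0 : bad m0 by exists f0.
have [m [f [Jf nIf LTf]] m_min] := term_le_min le_term bad_m0.
have LTJ_m : in_LTset le J m by exists f; split=> //; exact: notin_ideal_neq0 nIf.
have [g [Ig _ LTg]] := LT_JI m LTJ_m.
pose c := f@_m / g@_m; pose h := f - c%:MP * g.
have Jh : J h by apply: idealB => //; apply: idealMl => //; exact: IJ.
have nIh : ~ I h.
  move=> Ih; apply: nIf; rewrite -(subrK (c%:MP * g) f).
  by apply: idealD => //; exact: idealMl.
have [m' LTh] := is_LT_exists (notin_ideal_neq0 idealI nIh).
have /andP [le_m'm /eqP neq_m'm] := LT_cancel LTf LTg (proj1 LTh).
apply: neq_m'm; apply: (term_le_anti le_term le_m'm).
by apply: m_min; exists h.
Qed.

End LeadingTerms.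

Theorem corollary4p9 (n : nat) (K : fieldType) (sigma : rel 'X_{1..n})
    (I J : {mpoly K[n]} -> Prop) :
  term_order sigma -> is_ideal I -> is_ideal J ->
  (forall f, I f -> J f) -> (exists f, J f /\ ~ I f) ->
  tuple_prec sigma (O_sigma sigma J) (O_sigma sigma I).
Proof.
move=> sigma_term idealI idealJ IJ [f [Jf nIf]].
have [sorted_OI OI_mingen] := O_sigmaP sigma_term I.
have [sorted_OJ OJ_mingen] := O_sigmaP sigma_term J.
have LT_IJ m : in_LTset sigma I m -> in_LTset sigma J m.
  by case=> g [Ig g_neq0 LTg]; exists g; split=> //; exact: IJ.
apply: tuple_prec_of_cover => //.
- move=> g /OI_mingen [/LT_IJ /mingen_below [h /OJ_mingen h_in le_hg] _].
  by exists h.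
- by move=> g g' /OI_mingen [LTg _] /OI_mingen [_ g'_min] /(g'_min g LTg) ->.
- apply/eqP => eq_O; apply: nIf.
  apply: (ideal_incl_of_LTset_incl sigma_term idealI idealJ IJ _ Jf).
  move=> m /mingen_below [h /OJ_mingen]; rewrite eq_O => /OI_mingen [LTh _] le_hm.
  exact: (in_LTset_lepm sigma_term idealI LTh le_hm).
Qed.
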